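(* Let $\phi=(\phi_i)_{i\ge1}$ be a sequence of real numbers and define $\mathcal{H}_0^{\phi}=1$ and, for $n\ge0$, $\mathcal{H}_{n+1}^{\phi}(x)=2x\mathcal{H}_n^{\phi}(x)-(\mathcal{H}_n^{\phi})'(x)+\phi_{n+1}\mathcal{H}_n^{\phi}(x)$ (so $\mathcal{H}_n^\phi$ has degree $n$ and depends only on $\phi_1,\dots,\phi_n$). For $l\ge1$ let $\phi^{\{l\}}$ be the sequence obtained from $\phi$ by removing $\phi_l$ ($\phi^{\{l\}}_i=\phi_i$ for $i<l$, $\phi^{\{l\}}_i=\phi_{i+1}$ for $i\ge l$), and for a real $M$ let $\phi^{l,M}$ be the sequence $\phi^{l,M}_i=\phi_i+M\delta_{i,l}$. Then: (1) For every $n\ge0$, $\mathcal{H}_n^\phi$ has $n$ real and simple zeros, and for every $l\ge1$ the zeros of $\mathcal{H}_{n+1}^\phi$ interlace the zeros of $\mathcal{H}_n^{\phi^{\{l\}}}$. (2) Let $\zeta_k(n,\phi)$, $1\le k\le n$, denote the $k$-th zero of $\mathcal{H}_n^\phi$ in increasing order. If $\phi$ and $\rho$ are real sequences with $\phi_j\le\rho_j$ for all $j\ge1$, then $\zeta_k(n,\rho)\le\zeta_k(n,\phi)$ for all $1\le k\le n$. (3) Let $l\le n$ be positive integers and $M\neq0$ real. If $M>0$, the zeros of $\mathcal{H}_n^{\phi^{l,M}}$ interlace the zeros of $\mathcal{H}_n^\phi$; if $M<0$, the zeros of $\mathcal{H}_n^{\phi}$ interlace the zeros of $\mathcal{H}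_n^{\phi^{l,M}}$.
   Context: $\delta_{i,l}$ is the Kronecker delta. Interlacing: given two finite sets $U,V$ of real numbers, $U$ (strictly) interlaces $V$ if $\min U<\min V$ and between any two consecutive elements of either of the two sets there is an element of the other; ''the zeros of $p$ interlace the zeros of $q$'' means the corresponding sets of zeros satisfy this. *)

From HB Require Import structures.
From mathcomp Require Import all_boot all_order all_algebra.
From mathcomp Require Export reals.
Set Implicit Arguments. Unset Strict Implicit. Unset Printing Implicit Defensive.
Import Order.TTheory GRing.Theory Num.Theory.
Local Open Scope ring_scope.

(* Sequences phi = (phi_i)_{i>=1} are functions nat -> R; phi 0 is unused. *)

Fixpoint Hpoly (R : realType) (phi : nat -> R) (n : nat) : {poly R} :=
  match n with
  | 0 => 1
  | m.+1 => 2%:R *: ('X * Hpoly phi m) - (Hpoly phi m)^`() + (phi m.+1)%:P * Hpoly phi m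
  end.

Definition remove_at (R : realType) (phi : nat -> R) (l : nat) : nat -> R :=
  fun i => if (i < l)%N then phi i else phi i.+1.

Definition perturb (R : realType) (phi : nat -> R) (l : nat) (M : R) : nat -> R :=
  fun i => phi i + (if i == l then M else 0).

Definition interlace (R : realType) (U V : R -> bool) : Prop :=
  (exists2 u, U u & forall v, V v -> u < v) /\
  (forall a b, U a -> U b -> a < b -> (forall c, U c -> ~ (a < c < b)) ->
     exists2 v, V v & a < v < b) /\
  (forall a b, V a -> V b -> a < b -> (forall c, V c -> ~ (a < c < b)) ->
     exists2 u, U u & a < u < b).

Definition zero_seq (R : realType) (p : {poly R}) (s : seq R) : Prop :=
  sorted <%R s /\ forall x, root p x = (x \in s).

(* The recursion reads H_{n+1} = T_{phi_{n+1}} H_n with T_c p = (2X + c) p - p'.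
   These operators commute, so H^phi_{n+1} = T_{phi_l} H^{phi^{l}}_n. If q has
   simple real roots r_1 < ... < r_m and a positive leading coefficient, then
   T_c q = -q' at every r_j, so T_c q alternates in sign along the r_j and has
   the signs of -oo and +oo beyond them: T_c q has m + 1 simple real roots
   interlacing the r_j, which gives (1) by induction. Moreover
   H^{phi^{l,M}}_n = H^phi_n + M H^{phi^{l}}_{n-1}; at the zeros of H^phi_n this is
   M times a polynomial whose zeros interlace them, hence alternates in sign,
   and the new zeros lie on the side of the old ones given by the sign of M
   (3). Raising the parameters one at a time moves every zero to the left (2). *)

From HB Require Import structures.
From mathcomp Require Import all_boot all_order all_algebra reals polyrcf.
From mathcomp Require Import ring.
Set Implicit Arguments. Unset Strict Implicit. Unset Printing Implicit Defensive.
Import Order.TTheory GRing.Theory Num.Theory.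
Local Open Scope ring_scope.

Lemma count_nth_split (T : Type) (a : pred T) x0 (t : seq T) k :
  (k <= size t)%N -> (forall i, (i < k)%N -> ~~ a (nth x0 t i)) ->
  (forall i, (k <= i < size t)%N -> a (nth x0 t i)) ->
  count a t = (size t - k)%N.
Proof.
move=> kt lo hi; rewrite -(mkseq_nth x0 t) count_map size_mkseq.
rewrite -{1}(subnKC kt) iotaD count_cat add0n.
rewrite (eq_in_count (a2 := pred0)) ?count_pred0; last first.
  by move=> i; rewrite mem_iota add0n => /andP[_ /lo /negbTE].
rewrite (eq_in_count (a2 := predT)) ?count_predT ?size_iota //.
by move=> i; rewrite mem_iota subnKC // => /hi.
Qed.

Section Interlaced.
Variable R : numDomainType.
Implicit Types s t : seq R.

Definition interlaced s t :=
  [/\ (size t <= size s <= (size t).+1)%N,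
      forall i, (i < size t)%N -> s`_i < t`_i &
      forall i, (i.+1 < size s)%N -> t`_i < s`_i.+1].

Lemma interlaced_sortedl s t : interlaced s t -> sorted <%R s.
Proof.
case=> /andP[_ st] lt gt; apply/(sortedP 0) => i si.
by rewrite (lt_trans (lt _ _) (gt _ si)) // -ltnS (leq_trans si st).
Qed.

Lemma interlaced_sortedr s t : interlaced s t -> sorted <%R t.
Proof.
case=> /andP[ts _] lt gt; apply/(sortedP 0) => i ti.
by rewrite (lt_trans (gt _ _) (lt _ ti)) // (leq_trans ti ts).
Qed.

Lemma interlaced_behead a s t : interlaced (a :: s) t -> interlaced t s.
Proof.
case=> /= /andP[ts st] lt gt; split.
- by rewrite -ltnS ts st.
- by move=> i; apply: gt.
- by move=> i /lt.
Qed.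

Lemma interlaced_rconsl s t b :
  size s = size t -> interlaced (rcons s b) t -> interlaced s t.
Proof.
move=> st [_ lt gt]; split.
- by rewrite st leqnn leqnSn.
- by move=> i it; have := lt i it; rewrite nth_rcons st it.
- move=> i si; have := gt i; rewrite size_rcons nth_rcons si.
  by apply; rewrite (ltn_trans si).
Qed.

Lemma interlaced_rconsr s t b :
  size s = (size t).+1 -> interlaced s (rcons t b) -> interlaced s t.
Proof.
move=> st [_ lt gt]; split.
- by rewrite st leqnSn leqnn.
- move=> i it; have := lt i; rewrite size_rcons nth_rcons it.
  by apply; rewrite (ltn_trans it).
- by move=> i si; have := gt i si; rewrite nth_rcons -ltnS -st si.
Qed.

Lemma interlaced_nth s t k : interlaced s t -> (k < size s)%N ->
  (forall i, (i < k)%N -> t`_i < s`_k) /\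
  (forall i, (k <= i < size t)%N -> s`_k < t`_i).
Proof.
move=> hst ks; have ss := interlaced_sortedl hst; have st := interlaced_sortedr hst.
case: hst => /andP[ts _] lt gt; split => [i ik | i /andP[ki it]].
- apply: (lt_le_trans (gt i (leq_ltn_trans ik ks))).
  by rewrite lt_sorted_leq_nth ?inE // (leq_ltn_trans ik ks).
- apply: (le_lt_trans _ (lt i it)).
  by rewrite lt_sorted_leq_nth ?inE // (leq_trans it ts).
Qed.

Lemma interlaced_notin s t k : interlaced s t -> (k < size s)%N -> s`_k \notin t.
Proof.
move=> hst ks; have [lo hi] := interlaced_nth hst ks.
apply/(nthP 0) => -[i it ti]; case: (ltnP i k) => [/lo | ki].
  by rewrite ti ltxx.
by have := hi i; rewrite ki it ti ltxx => /(_ isT).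
Qed.

Lemma count_gt_interlaced s t k : interlaced s t -> (k < size s)%N ->
  count (fun y => s`_k < y) t = (size t - k)%N.
Proof.
move=> hst ks; have [lo hi] := interlaced_nth hst ks.
apply: (count_nth_split (x0 := 0)) => [|i /lo ti|//]; last by rewrite lt_gtF.
by case: hst => /andP[_ st] _ _; rewrite -ltnS (leq_trans ks st).
Qed.

Lemma count_gt_sorted_nth s k : sorted <%R s -> (k < size s)%N ->
  count (fun y => s`_k < y) s = (size s - k.+1)%N.
Proof.
move=> ss ks; apply: (count_nth_split (x0 := 0)) => // [i ik | i /andP[ki ir]] /=.
  by rewrite le_gtF // lt_sorted_leq_nth ?inE // (leq_trans ik ks).
by rewrite lt_sorted_ltn_nth ?inE.
Qed.

Lemma interlaced_le s t : interlaced s t -> size s = size t ->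
  forall k, s`_k <= t`_k.
Proof.
move=> [_ lt _] st k; case: (ltnP k (size t)) => kt; first exact/ltW/lt.
by rewrite !nth_default ?st.
Qed.

Lemma consecutive_nth s a b : sorted <%R s -> a \in s -> b \in s -> a < b ->
  (forall c, c \in s -> ~ (a < c < b)) ->
  exists2 i, (i.+1 < size s)%N & a = s`_i /\ b = s`_i.+1.
Proof.
move=> ss /(nthP 0)[i si <-] /(nthP 0)[j sj <-].
rewrite lt_sorted_ltn_nth ?inE // leq_eqVlt => /predU1P[ji | ij] between.
  by subst j; exists i.
have si1 : (i.+1 < size s)%N := ltn_trans ij sj.
exfalso; apply: (between _ (mem_nth 0 si1)).
by rewrite !lt_sorted_ltn_nth ?inE ?ltnSn.
Qed.

End Interlaced.

Lemma signr_mul_lt0 (R : numDomainType) k (u v : R) :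
  0 < (-1) ^+ k.+1 * u -> 0 < (-1) ^+ k * v -> u * v < 0.
Proof.
move=> hu hv; have := mulr_gt0 hu hv.
by rewrite mulrACA exprS mulN1r mulNr -expr2 sqrr_sign mulN1r oppr_gt0.
Qed.

Section HermiteStep.
Variable R : numDomainType.
Implicit Types (c : R) (p : {poly R}).

Definition hermite_step c p : {poly R} := 2%:R *: ('X * p) - p^`() + c%:P * p.

Lemma hermite_stepC a b p :
  hermite_step a (hermite_step b p) = hermite_step b (hermite_step a p).
Proof. by rewrite /hermite_step -!mul_polyC !derivE; ring. Qed.

Lemma hermite_stepD c d p : hermite_step (c + d) p = hermite_step c p + d *: p.
Proof. by rewrite /hermite_step polyCD -!mul_polyC; ring. Qed.

Lemma hermite_step_root c p y : root p y -> (hermite_step c p).[y] = - p^`().[y].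
Proof.
move=> /rootP py; rewrite /hermite_step.
by rewrite !(hornerD, hornerN, hornerZ, hornerM, hornerX, hornerC) py; ring.
Qed.

Lemma size_lead_hermite_step c p : p != 0 ->
  size (hermite_step c p) = (size p).+1 /\
  lead_coef (hermite_step c p) = 2%:R * lead_coef p.
Proof.
move=> p0; set L : {poly R} := 2%:R *: 'X + c%:P.
have sX : size (2%:R *: 'X : {poly R}) = 2%N.
  by rewrite size_scale ?size_polyX ?pnatr_eq0.
have cX : (size c%:P < size (2%:R *: 'X : {poly R}))%N.
  by rewrite sX ltnS size_polyC_leq1.
have sL : size L = 2%N by rewrite size_polyDl.
have lL : lead_coef L = 2%:R by rewrite lead_coefDl // lead_coefZ lead_coefX mulr1.
have sLp : size (L * p) = (size p).+1.
  by rewrite size_mul ?sL // -size_poly_gt0 sL.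
have dLp : (size (- p^`()) < size (L * p)%R)%N.
  by rewrite size_polyN sLp ltnS ltnW // lt_size_deriv.
have -> : hermite_step c p = L * p - p^`().
  by rewrite /hermite_step /L -!mul_polyC; ring.
by rewrite size_polyDl // lead_coefDl // lead_coefM lL.
Qed.

End HermiteStep.

Section RealSplit.
Variable R : rcfType.
Implicit Types (p q : {poly R}) (s x : seq R) (a y : R).

Definition real_split p s :=
  [/\ sorted <%R s, size p = (size s).+1, all (root p) s & 0 < lead_coef p].

Lemma real_split_neq0 p s : real_split p s -> p != 0.
Proof. by case=> _ _ _ lp; rewrite -lead_coef_eq0 gt_eqF. Qed.

Lemma real_split_rootE p s : real_split p s -> forall y, root p y = (y \in s).
Proof.
move=> hs y; have p0 := real_split_neq0 hs; case: hs => ss sp rs _.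
apply/idP/idP => [py | /(allP rs)//]; apply: contraT => ys.
have : (size (y :: s) < size p)%N.
  by apply: max_poly_roots => //=; rewrite ?py ?rs ?ys ?lt_sorted_uniq.
by rewrite sp ltnn.
Qed.

Lemma real_split_prod p s : real_split p s ->
  p = lead_coef p *: \prod_(y <- s) ('X - y%:P).
Proof.
case=> ss sp rs _; apply: all_roots_prod_XsubC => //.
by rewrite uniq_rootsE lt_sorted_uniq.
Qed.

Lemma real_split_uniq p s s' : real_split p s -> real_split p s' -> s = s'.
Proof.
move=> hs hs'; apply: lt_sorted_eq; [by case: hs | by case: hs' |] => y.
by rewrite -(real_split_rootE hs) (real_split_rootE hs').
Qed.

Lemma sign_prod_subr s y : y \notin s ->
  0 < (-1) ^+ count (fun z => y < z) s * \prod_(z <- s) (y - z).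
Proof.
elim: s => [|z s IH]; first by rewrite big_nil mulr1 ltr01.
rewrite inE negb_or big_cons /= => /andP[yz /IH ys].
rewrite exprD mulrACA; apply: mulr_gt0 => //; case: (ltrP y z) => [yz' | zy].
  by rewrite mulN1r oppr_gt0 subr_lt0.
by rewrite mul1r subr_gt0 lt_neqAle eq_sym yz.
Qed.

Lemma real_split_sign p s y : real_split p s -> y \notin s ->
  0 < (-1) ^+ count (fun z => y < z) s * p.[y].
Proof.
move=> hs ys; rewrite (real_split_prod hs) hornerZ horner_prod.
under eq_bigr do rewrite hornerXsubC.
by rewrite mulrCA; apply: mulr_gt0; [case: hs | exact: sign_prod_subr].
Qed.

Lemma real_split_deriv_sign p s y : real_split p s -> y \in s ->
  0 < (-1) ^+ count (fun z => y < z) s * p^`().[y].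
Proof.
move=> hs ys; have us : uniq s by case: hs => /lt_sorted_uniq.
rewrite (real_split_prod hs) (big_rem _ ys) /= derivZ derivM hornerZ hornerD.
rewrite !hornerM hornerXsubC subrr mul0r addr0 derivXsubC hornerC mul1r.
rewrite horner_prod; under eq_bigr do rewrite hornerXsubC.
rewrite ((permP (perm_to_rem ys)) (fun z => y < z)) /= ltxx add0n mulrCA.
by apply: mulr_gt0; [case: hs | apply: sign_prod_subr; rewrite mem_rem_uniqF].
Qed.

Lemma poly_pos_pinfty p a : 0 < lead_coef p -> exists2 b, a < b & 0 < p.[b].
Proof.
move=> lp; have p0 : p != 0 by rewrite -lead_coef_eq0 gt_eqF.
exists (Num.max (a + 1) (cauchy_bound p)); first by rewrite lt_max ltrDl ltr01.
rewrite -sgr_gt0 (sgp_pinftyP (ge_cauchy_bound p0)) ?sgr_gt0 //.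
by rewrite in_itv /= le_max lexx orbT.
Qed.

Lemma poly_sign_minfty p a : 0 < lead_coef p ->
  exists2 b, b < a & 0 < (-1) ^+ (size p).-1 * p.[b].
Proof.
move=> lp; have p0 : p != 0 by rewrite -lead_coef_eq0 gt_eqF.
exists (Num.min (a - 1) (- cauchy_bound p)); first by rewrite gt_min gtrDl ltrN10.
rewrite -sgr_gt0 sgrM (sgp_minftyP (le_cauchy_bound p0)); last first.
  by rewrite in_itv /= ge_min lexx orbT.
by rewrite /sgp_minfty sgrM mulrA -expr2 sqr_sg signr_eq0 mul1r sgr_gt0.
Qed.

Lemma roots_between p x : sorted <%R x ->
  (forall i, (i.+1 < size x)%N -> p.[x`_i] * p.[x`_i.+1] < 0) ->
  exists s, [/\ size s = (size x).-1, all (root p) s & interlaced x s].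
Proof.
elim: x => [|a [|b x] IH] /=; first by exists [::].
  by move=> _ _; exists [::]; split => //; split.
move=> /andP[ab sx] ch; have [s [sz rs [_ lt gt]]] := IH sx (fun i => ch i.+1).
have [y /itvP yab ry] := poly_ivtoo (ltW ab) (ch 0%N isT).
exists (y :: s); split; rewrite /= ?ry ?sz //; split => /=.
- by rewrite sz leqnn leqnSn.
- by case=> [|i] /=; [rewrite yab | apply: lt].
- by case=> [|i] /=; [rewrite yab | apply: gt].
Qed.

(* The sign pattern of a polynomial with positive leading coefficient and
   exactly one root between consecutive points and none after the last one. *)
Definition alternates p x :=
  sorted <%R x /\
  forall i, (i < size x)%N -> 0 < (-1) ^+ (size x - i.+1) * p.[x`_i].

Lemma alternates_real_split p x : 0 < lead_coef p -> size p = size x ->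
  alternates p x -> exists s, real_split p s /\ interlaced x s.
Proof.
move=> lp px [sx sg].
have ch i : (i.+1 < size x)%N -> p.[x`_i] * p.[x`_i.+1] < 0.
  move=> ix; apply: (signr_mul_lt0 _ (sg _ ix)).
  by rewrite subnSK // sg // ltnW.
have [s [sz rs hxs]] := roots_between sx ch; exists s; split => //.
split => //; first exact: interlaced_sortedr hxs.
rewrite px sz prednK // -px size_poly_gt0 -lead_coef_eq0 gt_eqF //.
Qed.

Lemma alternates_cons p x : 0 < lead_coef p -> size p = (size x).+1 ->
  alternates p x -> exists a, alternates p (a :: x).
Proof.
move=> lp px [sx sg]; have [a ax pa] := poly_sign_minfty (head 0 x) lp.
exists a; split.
  by case: x ax {px sg} sx => //= b x ab ->; rewrite ab.
case=> [|i] /=; first by rewrite subn1 -px.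
by rewrite ltnS subSS => /sg.
Qed.

Lemma alternates_rcons p x : 0 < lead_coef p -> sorted <%R x ->
  (forall i, (i < size x)%N -> 0 < (-1) ^+ (size x - i) * p.[x`_i]) ->
  exists b, alternates p (rcons x b).
Proof.
move=> lp sx sg; have [b xb pb] := poly_pos_pinfty (last 0 x) lp.
exists b; split.
  by case: x xb {sg} sx => //= a x xb ax; rewrite rcons_path ax xb.
move=> i; rewrite size_rcons ltnS nth_rcons subSS leq_eqVlt.
by case/predU1P => [-> | ix]; rewrite ?ltnn ?eqxx ?subnn ?expr0 ?mul1r ?ix ?sg.
Qed.

Lemma real_split_sign_interlaced q r z k : real_split q r -> interlaced z r ->
  size z = (size r).+1 -> (k < size z)%N ->
  0 < (-1) ^+ (size z - k.+1) * q.[z`_k].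
Proof.
move=> hq hzr zr kz; rewrite zr subSS -(count_gt_interlaced hzr kz).
exact: real_split_sign hq (interlaced_notin hzr kz).
Qed.

Section Perturbation.
Variables (P Q : {poly R}) (z r : seq R).
Hypotheses (hP : real_split P z) (hQ : real_split Q r) (hzr : interlaced z r).
Hypothesis PQ : size P = (size Q).+1.

Lemma size_lead_coef_add_scale M :
  size (P + M *: Q) = size P /\ lead_coef (P + M *: Q) = lead_coef P.
Proof.
have QP : (size (M *: Q) < size P)%N by rewrite PQ ltnS size_scale_leq.
by rewrite size_polyDl // lead_coefDl.
Qed.

Lemma horner_add_scale_roots M k : (k < size z)%N ->
  (P + M *: Q).[z`_k] = M * Q.[z`_k].
Proof.
move=> kz; have /rootP Pz : root P z`_k by rewrite (real_split_rootE hP) mem_nth.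
by rewrite hornerD hornerZ Pz add0r.
Qed.

Lemma size_interlaced_roots : size z = (size r).+1.
Proof. by case: hP hQ => _ sP _ _ [_ sQ _ _]; move: PQ; rewrite sP sQ => -[]. Qed.

Lemma real_split_add_scale_gt0 M : 0 < M ->
  exists s, real_split (P + M *: Q) s /\ interlaced s z.
Proof.
move=> M0; have [sPM lPM] := size_lead_coef_add_scale M.
have [sz sP _ lP] := hP; have lp : 0 < lead_coef (P + M *: Q) by rewrite lPM.
have alt : alternates (P + M *: Q) z.
  split=> // k kz; rewrite horner_add_scale_roots // mulrCA mulr_gt0 //.
  exact: real_split_sign_interlaced hQ hzr size_interlaced_roots kz.
have [|a alt'] := alternates_cons lp _ alt; first by rewrite sPM.
have [|s [hs hx]] := alternates_real_split lp _ alt'; first by rewrite sPM.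
by exists s; split => //; apply: interlaced_behead hx.
Qed.

Lemma real_split_add_scale_lt0 M : M < 0 ->
  exists s, real_split (P + M *: Q) s /\ interlaced z s.
Proof.
move=> M0; have [sPM lPM] := size_lead_coef_add_scale M.
have [sz sP _ lP] := hP; have lp : 0 < lead_coef (P + M *: Q) by rewrite lPM.
have sg k : (k < size z)%N -> 0 < (-1) ^+ (size z - k) * (P + M *: Q).[z`_k].
  move=> kz; rewrite horner_add_scale_roots // -(subnSK kz) exprS mulN1r.
  rewrite mulrCA mulNr mulrN -mulNr mulr_gt0 ?oppr_gt0 //.
  exact: real_split_sign_interlaced hQ hzr size_interlaced_roots kz.
have [b alt] := alternates_rcons lp sz sg.
have [|s [hs hx]] := alternates_real_split lp _ alt; first by rewrite size_rcons sPM.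
exists s; split => //; apply: interlaced_rconsl hx.
by case: hs; rewrite sPM sP => _ [].
Qed.

End Perturbation.

Lemma hermite_step_real_split c q r : real_split q r ->
  exists s, real_split (hermite_step c q) s /\ interlaced s r.
Proof.
move=> hq; have [sr sq _ lq] := hq.
have [sp lp] := size_lead_hermite_step c (real_split_neq0 hq).
have lp0 : 0 < lead_coef (hermite_step c q) by rewrite lp mulr_gt0.
have sg j : (j < size r)%N ->
    0 < (-1) ^+ (size r - j) * (hermite_step c q).[r`_j].
  move=> jr; have rj : r`_j \in r by rewrite mem_nth.
  rewrite hermite_step_root ?(real_split_rootE hq) // -(subnSK jr) exprS.
  rewrite mulN1r mulrNN -(count_gt_sorted_nth sr jr).
  exact: real_split_deriv_sign hq rj.
have [b altb] := alternates_rcons lp0 sr sg.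
have [|a alta] := alternates_cons lp0 _ altb; first by rewrite size_rcons sp sq.
have [|s [hs hx]] := alternates_real_split lp0 _ alta.
  by rewrite /= size_rcons sp sq.
exists s; split => //; apply: interlaced_rconsr (interlaced_behead hx).
by case: hs; rewrite sp sq => _ [].
Qed.

End RealSplit.

Section HermitePolynomials.
Variable R : realType.
Implicit Types (phi rho : nat -> R) (p q : {poly R}) (s t z : seq R).

Lemma zero_seq_real_split p s t : real_split p s -> zero_seq p t -> t = s.
Proof.
move=> hs [st rt]; apply: lt_sorted_eq => //; first by case: hs.
by move=> y; rewrite -rt (real_split_rootE hs).
Qed.

Lemma interlace_roots p q s t : real_split p s -> real_split q t ->
  interlaced s t -> (0 < size s)%N -> interlace (root p) (root q).
Proof.
move=> hs ht hst s0; have ps := real_split_rootE hs; have qt := real_split_rootE ht.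
have ss := interlaced_sortedl hst; have st := interlaced_sortedr hst.
have [/andP[ts st1] lt gt] := hst; split; [|split] => [|a b|a b].
- exists s`_0 => [|v]; first by rewrite ps mem_nth.
  rewrite qt => /(nthP 0)[j jt <-]; apply: le_lt_trans (lt j jt).
  by rewrite lt_sorted_leq_nth ?inE // (leq_trans jt ts).
- rewrite !ps => sa sb ab between.
  have [i si [-> ->]] : exists2 i, (i.+1 < size s)%N & a = s`_i /\ b = s`_i.+1.
    by apply: consecutive_nth => // c; rewrite -ps; apply: between.
  have it : (i < size t)%N by rewrite -ltnS (leq_trans si st1).
  by exists t`_i; rewrite ?qt ?mem_nth ?lt ?gt.
- rewrite !qt => ta tb ab between.
  have [i ti [-> ->]] : exists2 i, (i.+1 < size t)%N & a = t`_i /\ b = t`_i.+1.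
    by apply: consecutive_nth => // c; rewrite -qt; apply: between.
  have si : (i.+1 < size s)%N by rewrite (leq_trans ti ts).
  by exists s`_i.+1; rewrite ?ps ?mem_nth ?gt ?lt.
Qed.

Lemma HpolyS phi n : Hpoly phi n.+1 = hermite_step (phi n.+1) (Hpoly phi n).
Proof. by []. Qed.

Lemma eq_Hpoly phi rho n : (forall i, (0 < i <= n)%N -> phi i = rho i) ->
  Hpoly phi n = Hpoly rho n.
Proof.
elim: n => [//|n IH] eq_phi; rewrite !HpolyS eq_phi ?leqnn // IH // => i.
by case/andP=> i0 iN; rewrite eq_phi // i0 (leq_trans iN).
Qed.

Lemma size_Hpoly phi n : size (Hpoly phi n) = n.+1.
Proof.
elim: n => [|n IH]; first by rewrite size_poly1.
by rewrite HpolyS (size_lead_hermite_step _ _).1 ?IH // -size_poly_gt0 IH.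
Qed.

Lemma Hpoly_real_split phi n : exists s, real_split (Hpoly phi n) s.
Proof.
elim: n => [|n [r /(hermite_step_real_split (phi n.+1)) [s [hs _]]]].
  by exists [::]; split; rewrite ?size_poly1 ?lead_coef1.
by exists s.
Qed.

Lemma size_real_split_Hpoly phi n s : real_split (Hpoly phi n) s -> size s = n.
Proof. by case=> _; rewrite size_Hpoly => -[]. Qed.

Lemma Hpoly_remove_at phi n l : (0 < l <= n.+1)%N ->
  Hpoly phi n.+1 = hermite_step (phi l) (Hpoly (remove_at phi l) n).
Proof.
have remove_last m :
    Hpoly phi m.+1 = hermite_step (phi m.+1) (Hpoly (remove_at phi m.+1) m).
  rewrite HpolyS; congr hermite_step; apply: eq_Hpoly => i /andP[_ im].
  by rewrite /remove_at ltnS im.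
elim: n => [|n IH] /andP[l0 ln].
  by have /eqP-> : l == 1%N by rewrite eqn_leq ln.
case: (ltngtP l n.+2) ln => // [|-> _]; last exact: remove_last.
rewrite ltnS => ln _.
by rewrite HpolyS IH ?l0 // hermite_stepC HpolyS /remove_at ltnNge ln.
Qed.

Lemma Hpoly_remove_at_interlaced phi n l : (0 < l)%N ->
  exists z r, [/\ real_split (Hpoly phi n.+1) z,
                 real_split (Hpoly (remove_at phi l) n) r & interlaced z r].
Proof.
move=> l0; have [r hr] := Hpoly_real_split (remove_at phi l) n.
have [c ->] : exists c, Hpoly phi n.+1 = hermite_step c (Hpoly (remove_at phi l) n).
  case: (leqP l n.+1) => ln.
    by exists (phi l); apply: Hpoly_remove_at; rewrite l0.
  exists (phi n.+1); rewrite HpolyS; congr hermite_step.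
  apply: eq_Hpoly => i /andP[_ iN].
  by rewrite /remove_at (leq_ltn_trans iN (ltnW ln)).
by have [z [hz hzr]] := hermite_step_real_split c hr; exists z, r.
Qed.

Lemma remove_at_perturb phi l M : remove_at (perturb phi l M) l =1 remove_at phi l.
Proof.
move=> i; rewrite /remove_at /perturb; case: ltnP => [il | li].
  by rewrite ltn_eqF ?addr0.
by rewrite gtn_eqF ?addr0.
Qed.

Lemma Hpoly_perturb phi n l M : (0 < l <= n.+1)%N ->
  Hpoly (perturb phi l M) n.+1 = Hpoly phi n.+1 + M *: Hpoly (remove_at phi l) n.
Proof.
move=> hl; rewrite !(Hpoly_remove_at _ hl) (eq_Hpoly (rho := remove_at phi l)).
  by rewrite {1}/perturb eqxx hermite_stepD.
by move=> i _; apply: remove_at_perturb.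
Qed.

Lemma Hpoly_perturb_gt0 phi n l M : (0 < l <= n)%N -> 0 < M ->
  exists z s, [/\ real_split (Hpoly phi n) z,
                 real_split (Hpoly (perturb phi l M) n) s & interlaced s z].
Proof.
case: n => [|n]; first by rewrite ltnNge andNb.
case/andP=> l0 ln M0; have [z [r [hz hr hzr]]] := Hpoly_remove_at_interlaced phi n l0.
have [|s [hs hsz]] := real_split_add_scale_gt0 hz hr hzr _ M0.
  by rewrite !size_Hpoly.
by exists z, s; rewrite Hpoly_perturb ?l0.
Qed.

Lemma Hpoly_perturb_lt0 phi n l M : (0 < l <= n)%N -> M < 0 ->
  exists z s, [/\ real_split (Hpoly phi n) z,
                 real_split (Hpoly (perturb phi l M) n) s & interlaced z s].
Proof.
case: n => [|n]; first by rewrite ltnNge andNb.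
case/andP=> l0 ln M0; have [z [r [hz hr hzr]]] := Hpoly_remove_at_interlaced phi n l0.
have [|s [hs hzs]] := real_split_add_scale_lt0 hz hr hzr _ M0.
  by rewrite !size_Hpoly.
by exists z, s; rewrite Hpoly_perturb ?l0.
Qed.

Lemma Hpoly_perturb_zeros_le phi n l M z s : (0 < l)%N -> 0 <= M ->
  real_split (Hpoly phi n) z -> real_split (Hpoly (perturb phi l M) n) s ->
  forall k, s`_k <= z`_k.
Proof.
move=> l0 M0 hz hs k.
have [[ln Mpos] | same] :
    (l <= n)%N /\ 0 < M \/ Hpoly (perturb phi l M) n = Hpoly phi n.
  case: (leqP l n) => [ln | nl]; last first.
    right; apply: eq_Hpoly => i /andP[_ iN].
    by rewrite /perturb ltn_eqF ?addr0 // (leq_ltn_trans iN nl).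
  have [M_0 | Mn0] := eqVneq M 0; last by left; rewrite lt_def Mn0.
  by right; apply: eq_Hpoly => i _; rewrite /perturb M_0 if_same addr0.
- have hl : (0 < l <= n)%N by rewrite l0.
  have [z' [s' [hz' hs' hsz]]] := Hpoly_perturb_gt0 phi hl Mpos.
  rewrite (real_split_uniq hz hz') (real_split_uniq hs hs').
  apply: (interlaced_le hsz).
  by rewrite (size_real_split_Hpoly hz') (size_real_split_Hpoly hs').
- by rewrite same in hs; rewrite (real_split_uniq hs hz).
Qed.

Lemma Hpoly_zeros_antitone phi rho n z s : (forall j, (0 < j)%N -> phi j <= rho j) ->
  real_split (Hpoly phi n) z -> real_split (Hpoly rho n) s ->
  forall k, s`_k <= z`_k.
Proof.
move=> le_phi_rho hz hs.
pose psi j i := if (i <= j)%N then rho i else phi i.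
suff le_psi j t : real_split (Hpoly (psi j) n) t -> forall k, t`_k <= z`_k.
  apply: (le_psi n); rewrite (eq_Hpoly (rho := rho)) // => i /andP[_ iN].
  by rewrite /psi iN.
elim: j t => [|j IH] t ht k.
  suff -> : t = z by [].
  apply: real_split_uniq ht _; rewrite (eq_Hpoly (rho := phi)) // => i /andP[i0 _].
  by rewrite /psi leqNgt i0.
have [t' ht'] := Hpoly_real_split (psi j) n.
apply: le_trans (IH t' ht' k).
apply: (Hpoly_perturb_zeros_le (l := j.+1) (M := rho j.+1 - phi j.+1)) ht' _ k => //.
  by rewrite subr_ge0 le_phi_rho.
rewrite (eq_Hpoly (rho := psi j.+1)) // => i _; rewrite /perturb /psi.
case: (ltngtP i j.+1) => [ij | ji | ->]; rewrite ?addr0.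
- by rewrite -ltnS ij.
- by rewrite leqNgt (ltnW ji).
- by rewrite ltnn addrC subrK.
Qed.

End HermitePolynomials.

Theorem theorem3p6 (R : realType) :
  (* (1a) H_n^phi has n real simple zeros *)
  (forall (phi : nat -> R) (n : nat), exists s : seq R,
     [/\ sorted <%R s, size s = n &
         Hpoly phi n = lead_coef (Hpoly phi n) *: \prod_(x <- s) ('X - x%:P)]) /\
  (* (1b) zeros of H_{n+1}^phi interlace zeros of H_n^{phi^{l}} *)
  (forall (phi : nat -> R) (n l : nat), (1 <= l)%N ->
     interlace (root (Hpoly phi n.+1)) (root (Hpoly (remove_at phi l) n))) /\
  (* (2) monotonicity of zeros *)
  (forall (phi rho : nat -> R) (n : nat),
     (forall j, (1 <= j)%N -> phi j <= rho j) ->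
     forall sphi srho : seq R,
       zero_seq (Hpoly phi n) sphi -> zero_seq (Hpoly rho n) srho ->
       forall k, (1 <= k <= n)%N -> nth 0 srho k.-1 <= nth 0 sphi k.-1) /\
  (* (3) perturbation of a single parameter *)
  (forall (phi : nat -> R) (l n : nat) (M : R),
     (1 <= l)%N -> (l <= n)%N -> M != 0 ->
     (0 < M -> interlace (root (Hpoly (perturb phi l M) n)) (root (Hpoly phi n))) /\
     (M < 0 -> interlace (root (Hpoly phi n)) (root (Hpoly (perturb phi l M) n)))).
Proof.
split; [|split; [|split]].
- move=> phi n; have [s hs] := Hpoly_real_split phi n.
  exists s; split; [by case: hs | exact: size_real_split_Hpoly hs |].
  exact: real_split_prod.
- move=> phi n l l0; have [z [r [hz hr hzr]]] := Hpoly_remove_at_interlaced phi n l0.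
  by apply: (interlace_roots hz hr hzr); rewrite (size_real_split_Hpoly hz).
- move=> phi rho n le_phi_rho sphi srho zphi zrho k _.
  have [z hz] := Hpoly_real_split phi n; have [s hs] := Hpoly_real_split rho n.
  rewrite (zero_seq_real_split hz zphi) (zero_seq_real_split hs zrho).
  exact: Hpoly_zeros_antitone le_phi_rho hz hs _.
- move=> phi l n M l0 ln _; have hl : (0 < l <= n)%N by rewrite l0.
  have n0 : (0 < n)%N := leq_trans l0 ln.
  split=> M0.
  + have [z [s [hz hs hsz]]] := Hpoly_perturb_gt0 phi hl M0.
    by apply: (interlace_roots hs hz hsz); rewrite (size_real_split_Hpoly hs).
  + have [z [s [hz hs hzs]]] := Hpoly_perturb_lt0 phi hl M0.
    by apply: (interlace_roots hz hs hzs); rewrite (size_real_split_Hpoly hz).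
Qed.
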